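(* Let $\mathcal M=(G,In,Out,Leak)$ be a linear compartmental model with $n$ compartments and compartmental matrix $A$, and let $q,r$ be compartments. Write $$\det\big((\lambda I-A)^{r,q}\big)=c_{n-1}\lambda^{n-1}+c_{n-2}\lambda^{n-2}+\dots+c_0.$$ Then $$c_k=(-1)^{q+r}\sum_{F\in\mathcal F^{r,q}_{n-k-1}(\widetilde G^*_q)}\pi_F\qquad\text{for }k=0,1,\dots,n-1.$$
   Context: A linear compartmental model $\mathcal M=(G,In,Out,Leak)$ consists of a finite directed graph $G=(V_G,E_G)$ without multi-edges, compartments $V_G=\{1,\dots,n\}$, and subsets $In,Out,Leak\subseteq V_G$; edge $j\to i$ carries label (parameter) $a_{ij}$ and each $i\in Leak$ carries $a_{0i}$. The compartmental matrix $A$ has $A_{ii}=-\sum_{k:\,i\to k\in E_G}a_{ki}$ (minus $a_{0i}$ if $i\in Leak$), $A_{ij}=a_{ij}$ if $j\to i\in E_G$, $0$ otherwise. $B^{r,q}$ denotes $B$ with row $r$ and column $q$ removed. The leak-augmented graph $\widetilde G$ is obtained from $G$ by adding a node $0$ and, for each $j\in Leak$, an edge $j\to0$ labeled $a_{0j}$; $\widetilde G^*_q$ is obtained from $\widetilde G$ by removing all edges outgoing from $q$. A spanning incoming forest of a graph is a spanning subgraph whose underlying undirected graph has no cycles and in which each node has at most one outgoing edge. $\mathcal F_j^{k,\ell}(H)$ is the set of spanning incoming forests of $H$ with exactly $j$ edges in which some connected component contains both $k$ and $\ell$. $\pi_F$ is the product of the edge labels of $F$ ($1$ if there are no edges). 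*)

From HB Require Import structures.
From mathcomp Require Import all_boot all_order all_algebra.
Set Implicit Arguments. Unset Strict Implicit. Unset Printing Implicit Defensive.
Import GRing.Theory.
Local Open Scope ring_scope.

(* Compartments are 'I_n (0-based; the paper's compartment i is our i-1,
   which does not change the parity of q + r).
   The graph is given by E : rel 'I_n with  E j i  meaning the edge j -> i;
   it must be irreflexive (no self-loops).  Labels: a i j is a_{ij}, the label
   of edge j -> i; a0 j is a_{0j}, the leak label of j. *)

Definition compartmental_matrix (R : comNzRingType) (n : nat) (E : rel 'I_n)
  (Leak : {set 'I_n}) (a : 'I_n -> 'I_n -> R) (a0 : 'I_n -> R) : 'M[R]_n :=
  \matrix_(i, j)
    if i == j then - (\sum_(k | E i k) a k i) - (if i \in Leak then a0 i else 0)
    else if E j i then a i j else 0.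

(* Nodes of the leak-augmented graph: None is node 0, Some i is compartment i. *)
Definition lnode (n : nat) := option 'I_n.
Definition ledge (n : nat) := (lnode n * lnode n)%type.  (* (source, target) *)

Definition edges_Gtilde_star (n : nat) (E : rel 'I_n) (Leak : {set 'I_n})
  (q : 'I_n) : {set ledge n} :=
  [set e : ledge n | match e with
                     | (Some j, Some i) => E j i && (j != q)
                     | (Some j, None) => (j \in Leak) && (j != q)
                     | _ => false
                     end].

Definition elabel (R : comNzRingType) (n : nat) (a : 'I_n -> 'I_n -> R)
  (a0 : 'I_n -> R) (e : ledge n) : R :=
  match e with
  | (Some j, Some i) => a i j
  | (Some j, None) => a0 j
  | _ => 0
  end.

Definition piF (R : comNzRingType) (n : nat) (a : 'I_n -> 'I_n -> R)
  (a0 : 'I_n -> R) (F : {set ledge n}) : R :=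
  \prod_(e in F) elabel a a0 e.

Definition joins (n : nat) (e : ledge n) (u v : lnode n) : bool :=
  (e == (u, v)) || (e == (v, u)).

Definition ucycle_of (n : nat) (F : {set ledge n}) (k : nat)
  (vs : k.-tuple (lnode n)) (es : k.-tuple (ledge n)) : bool :=
  [&& (2 <= k)%N, uniq vs, uniq es, all (fun e => e \in F) es &
      [forall i : 'I_k,
         joins (tnth es i) (tnth vs i) (nth None vs ((i.+1) %% k)%N)]].

(* The underlying undirected graph of F has no cycle (a cycle has distinct
   vertices, hence length at most the number n+1 of nodes). *)
Definition uacyclic (n : nat) (F : {set ledge n}) : bool :=
  ~~ [exists k : 'I_(n.+2),
        [exists vs : k.-tuple (lnode n),
           [exists es : k.-tuple (ledge n), ucycle_of F vs es]]].

Definition spanning_incoming_forest (n : nat) (H F : {set ledge n}) : bool :=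
  [&& F \subset H, uacyclic F &
      [forall u : lnode n, (#|[set e in F | e.1 == u]| <= 1)%N]].

Definition same_component (n : nat) (F : {set ledge n}) (u v : lnode n) : bool :=
  connect (fun x y => ((x, y) \in F) || ((y, x) \in F)) u v.

Definition forests_jkl (n : nat) (H : {set ledge n}) (j : nat)
  (k l : lnode n) : {set {set ledge n}} :=
  [set F : {set ledge n} | [&& spanning_incoming_forest H F, #|F| == j &
                               same_component F k l]].

(* Replacing column q of lambda I - A by the unit vector e_r turns the minor into
   a full determinant, up to the sign (-1)^(q+r).  For j <> q, column j of
   lambda I - A is lambda e_j + sum over the edges j -> t of G~*_q of
   a_tj (e_j - e_t), where e_0 = 0; so multilinearity expands the determinant
   over the choices, for every compartment, of lambda or of one outgoing edge.
   A choice is a self-map g of the nodes, and its term is pi_F lambda^(#lambdas)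
   times the determinant of the matrix with row e_r at q and rows e_j - e_(g j)
   elsewhere.  That determinant vanishes if g has a cycle (the rows along the
   cycle sum to zero); otherwise it is 1 or 0 according to whether iterating g
   from r ends in q.  Cycle-free choices are exactly the spanning incoming
   forests, and "iterating from r ends in q" means that r and q lie in the same
   component. *)

From mathcomp Require Import all_boot all_order all_algebra perm zify.
Set Implicit Arguments. Unset Strict Implicit. Unset Printing Implicit Defensive.
Import GRing.Theory.
Local Open Scope ring_scope.

Lemma big_option (V : nmodType) (T : finType) (F : option T -> V) :
  \sum_(x : option T) F x = F None + \sum_(y : T) F (Some y).
Proof.
rewrite (bigD1 None) //=; congr (_ + _).
rewrite (reindex_omap Some id) //=; last by case.
by apply: eq_bigl => y; rewrite eqxx.
Qed.

Lemma sum_iter_telescope (V : zmodType) (T : Type) (f : T -> T) (F : T -> V) x k :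
  \sum_(m < k) (F (iter m f x) - F (iter m.+1 f x)) = F x - F (iter k f x).
Proof.
elim: k => [|k IHk]; first by rewrite big_ord0 subrr.
by rewrite big_ord_recr /= IHk addrA subrK.
Qed.

Section CycleFree.
Variables (T : finType) (f : T -> T).

Definition cycle_free := [forall x, fconnect f (f x) x ==> (f x == x)].

Definition sink x := iter #|T| f x.

Lemma cycle_freePn :
  reflect (exists x, (f x != x) && fconnect f (f x) x) (~~ cycle_free).
Proof.
by apply: (iffP forallPn) => -[x xP]; exists x; move: xP; rewrite negb_imply andbC.
Qed.

Lemma cycle_moves x y :
  f x != x -> fconnect f (f x) x -> fconnect f x y -> f y != y.
Proof.
move=> fx cyc_x xy; have cyc : fcycle f (orbit f x) by rewrite -fconnect_f.
have yx : fconnect f y x.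
  by rewrite (fconnect_cycle cyc) ?orbit_uniq // -fconnect_orbit.
apply: contra fx => /eqP fy; have := iter_findex yx; rewrite iter_fix // => <-.
exact/eqP.
Qed.

Lemma iter_order_fconnect x : fconnect f (f x) x -> iter (order f x) f x = x.
Proof. by move/(orbitPcycle 2%N 4%N). Qed.

Hypothesis fP : cycle_free.

Lemma cycle_free_orderS x : f x != x -> order f x = (order f (f x)).+1.
Proof.
move=> fx; case: (orderPcycle f x) => // cyc.
have /forallP/(_ x) := fP; rewrite fconnect_f cyc => /eqP fxx.
by rewrite fxx eqxx in fx.
Qed.

Lemma iter_fixed_order m x : (order f x <= m.+1)%N -> f (iter m f x) = iter m f x.
Proof.
elim: m x => [|m IHm] x le_x.
  apply/eqP; apply: contraLR le_x => fx.
  by rewrite cycle_free_orderS // ltnS -ltnNge order_gt0.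
have [fx|fx] := eqVneq (f x) x; first by rewrite iter_fix.
by rewrite iterSr IHm // -ltnS -cycle_free_orderS.
Qed.

Lemma sink_fixed x : f (sink x) = sink x.
Proof. exact/iter_fixed_order/leqW/max_card. Qed.

Lemma sink_f x : sink (f x) = sink x.
Proof. by rewrite /sink -iterSr iterS sink_fixed. Qed.

End CycleFree.

Section FunEdges.
Variables (n : nat) (g : lnode n -> lnode n).

Definition fun_edges : {set ledge n} := [set e | (g e.1 == e.2) && (e.2 != e.1)].

Lemma mem_fun_edges u v : ((u, v) \in fun_edges) = (g u == v) && (v != u).
Proof. by rewrite inE. Qed.

Lemma same_component_fun_edges u v : cycle_free g ->
  same_component fun_edges u v = (sink g u == sink g v).
Proof.
move=> gP; rewrite /same_component.
set e := fun x y => _ || _.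
have sym_e : connect_sym e by apply: sym_connect_sym => x y; rewrite /e orbC.
have e_sink x y : e x y -> sink g x = sink g y.
  by rewrite /e !mem_fun_edges => /orP[] /andP[/eqP <- _]; rewrite sink_f.
have to_sink x : connect e x (sink g x).
  suff fe : subrel (frel g) (connect e).
    exact: connect_sub fe _ _ (fconnect_iter g _ x).
  move=> y _ /eqP <-; have [->|gy] := eqVneq (g y) y; first exact: connect0.
  by apply: connect1; rewrite /e mem_fun_edges eqxx gy.
apply/idP/eqP => [/connectP[p pP ->]|eq_sink].
  by elim: p u pP => //= y p IHp u /andP[/e_sink -> /IHp].
by apply: connect_trans (to_sink u) _; rewrite eq_sink sym_e.
Qed.

Lemma ucycle_fun_edges_closed k (vs : k.-tuple (lnode n)) (es : k.-tuple (ledge n)) :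
  ucycle_of fun_edges vs es -> {in vs, forall v, (g v != v) && (g v \in vs)}.
Proof.
case/and5P => k_ge2 vs_uniq es_uniq /allP es_F /forallP es_joins.
have endsP i : ((tnth es i).1 \in vs) && ((tnth es i).2 \in vs).
  have nth_vs : nth None vs (i.+1 %% k) \in vs.
    by rewrite mem_nth // size_tuple ltn_pmod // (leq_trans _ k_ge2).
  by case/orP: (es_joins i) => /eqP -> /=; rewrite mem_tnth nth_vs.
have esP i :
    tnth es i = ((tnth es i).1, g (tnth es i).1) /\ g (tnth es i).1 != (tnth es i).1.
  have := es_F _ (mem_tnth i es); case: (tnth es i) => u w.
  by rewrite mem_fun_edges => /andP[/eqP <-].
pose src i := (tnth es i).1.
have src_inj : injective src.
  move=> i j eq_ij; apply/(tuple_uniqP es es_uniq).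
  by rewrite (esP i).1 (esP j).1 -/(src i) -/(src j) eq_ij.
have src_vs : [set src i | i in 'I_k] = [set v in vs].
  apply/eqP; rewrite eqEcard; apply/andP; split.
    by apply/subsetP => _ /imsetP[i _ ->]; rewrite inE; case/andP: (endsP i).
  by rewrite card_imset // card_ord cardsE (card_uniqP vs_uniq) size_tuple.
move=> v v_vs; have : v \in [set src i | i in 'I_k] by rewrite src_vs inE.
case/imsetP => i _ ->.
have [eq_i gi] := esP i; rewrite gi /=; case/andP: (endsP i) => _.
by rewrite {1}eq_i.
Qed.

Lemma uacyclic_fun_edges : cycle_free g -> uacyclic fun_edges.
Proof.
move=> gP; apply/negP => /existsP[k /existsP[vs /existsP[es cyc]]].
have closed := ucycle_fun_edges_closed cyc.
have v0_vs : nth None vs 0 \in vs.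
  by case/and5P: cyc => k_ge2 *; rewrite mem_nth // size_tuple (leq_trans _ k_ge2).
have iter_vs m : iter m g (nth None vs 0) \in vs.
  by elim: m => //= m IHm; case/andP: (closed _ IHm).
by case/andP: (closed _ (iter_vs #|{: lnode n}|)); rewrite sink_fixed ?eqxx.
Qed.

Lemma cycle_not_uacyclic x :
  g x != x -> fconnect g (g x) x -> ~~ uacyclic fun_edges.
Proof.
move=> gx cyc_x; set k := order g x.
have iter_k : iter k g x = x by apply: iter_order_fconnect.
have k_gt1 : (1 < k)%N.
  rewrite ltn_neqAle order_gt0 andbT; apply: contra gx => /eqP k1.
  by rewrite -[g x]/(iter 1 g x) k1 iter_k.
have k_lt : (k < n.+2)%N.
  by rewrite ltnS (leq_trans (max_card _)) // card_option card_ord.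
pose vs := orbit g x; pose es := [seq (y, g y) | y <- vs].
have size_vs : size vs == k by rewrite size_orbit.
have size_es : size es == k by rewrite size_map size_orbit.
have nth_vs i : (i < k)%N -> nth None vs i = iter i g x.
  by move=> lt_ik; rewrite (set_nth_default x) ?size_orbit // nth_traject.
rewrite negbK; apply/existsP; exists (Ordinal k_lt).
apply/existsP; exists (Tuple size_vs); apply/existsP; exists (Tuple size_es).
apply/and5P; split => //=.
- exact: orbit_uniq.
- by rewrite map_inj_uniq ?orbit_uniq // => y z [].
- apply/allP => _ /mapP[y y_vs ->]; rewrite mem_fun_edges eqxx /=.
  by apply: cycle_moves gx cyc_x _; rewrite fconnect_orbit.
- apply/forallP => i; apply/orP; left.
  rewrite (tnth_nth None) (tnth_nth (None, None)) /= (nth_map None) ?size_orbit //.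
  rewrite nth_vs //; case: (ltnP i.+1 k) => [lt_ik|le_ki].
    by rewrite modn_small // nth_vs.
  have ik : i.+1 = k by apply/eqP; rewrite eqn_leq le_ki ltn_ord.
  by rewrite ik modnn nth_vs ?(ltnW k_gt1) // -iterS ik iter_k.
Qed.

Lemma uacyclic_fun_edgesE : uacyclic fun_edges = cycle_free g.
Proof.
apply/idP/idP => [|/uacyclic_fun_edges //].
by apply: contraLR => /cycle_freePn[x /andP[gx cyc_x]]; apply: cycle_not_uacyclic cyc_x.
Qed.

End FunEdges.

Section Determinants.
Variables (R : comPzRingType) (n : nat).

Lemma det_sum_rows (C : finType) (W : 'I_n -> C -> 'rV[R]_n) :
  \det (\matrix_j \sum_c W j c) =
  \sum_(f : {ffun 'I_n -> C}) \det (\matrix_j W j (f j)).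
Proof.
rewrite /determinant; transitivity (\sum_(s : {perm 'I_n}) \sum_(f : {ffun 'I_n -> C})
    (-1) ^+ s * \prod_i W i (f i) 0 (s i)).
  apply: eq_bigr => s _.
  rewrite -mulr_sumr -(bigA_distr_bigA (fun i c => W i c 0 (s i))).
  by congr (_ * _); apply: eq_bigr => i _; rewrite mxE summxE.
rewrite exchange_big /=; apply: eq_bigr => f _; apply: eq_bigr => s _.
by congr (_ * _); apply: eq_bigr => i _; rewrite mxE.
Qed.

Lemma det_unitriangular (P : 'M[R]_n) (d : 'I_n -> nat) :
  (forall i, P i i = 1) -> (forall i j, i != j -> P i j != 0 -> (d j < d i)%N) ->
  \det P = 1.
Proof.
move=> P_diag P_off; rewrite /determinant (bigD1 (1%g : {perm 'I_n})) //=.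
rewrite [X in _ + X]big1 ?addr0 => [|s s1].
  by rewrite odd_perm1 expr0 mul1r big1 // => i _; rewrite perm1 P_diag.
have [i0 si0] : exists i0, s i0 != i0.
  apply/existsP; apply: contraR s1 => /existsPn s_id.
  by apply/eqP/permP => i; rewrite perm1; apply/eqP; rewrite -[_ == _]negbK.
case: (@arg_minnP _ i0 (fun j => s j != j) d si0) => i si d_min.
have [Pi0|/(P_off _ _ (negbT _))] := eqVneq (P i (s i)) 0.
  by rewrite (bigD1 i) //= Pi0 mul0r mulr0.
have ssi : s (s i) != s i by apply: contra si => /eqP/perm_inj ->.
by rewrite eq_sym (negbTE si) ltnNge d_min // => /(_ erefl).
Qed.

Lemma det_eq0_lker (P : 'M[R]_n) (x : 'rV_n) j :
  x *m P = 0 -> x 0 j = 1 -> \det P = 0.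
Proof.
move=> xP xj; have := congr1 (mulmx^~ (\adj P)) xP.
rewrite -mulmxA mul_mx_adj mul0mx mul_mx_scalar => /matrixP /(_ 0 j).
by rewrite !mxE xj mulr1.
Qed.

Lemma det_add_row_comb (P : 'M[R]_n) (x : 'rV_n) q : x 0 q = 0 ->
  \det (\matrix_i (if i == q then row q P + x *m P else row i P)) = \det P.
Proof.
move=> xq; pose U : 'M[R]_n := 1%:M + \matrix_i ((i == q)%:R *: x).
have UE i l : U i l = (i == l)%:R + (i == q)%:R * x 0 l by rewrite !mxE.
have -> : \matrix_i (if i == q then row q P + x *m P else row i P) = U *m P.
  apply/row_matrixP => i.
  rewrite rowK row_mul linearD /= row1 rowK mulmxDl -rowE -scalemxAl.
  by case: eqP => [->|_]; rewrite ?scale1r ?scale0r ?addr0.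
rewrite det_mulmx (@det_unitriangular U (fun i => nat_of_bool (i == q))) ?mul1r //.
  move=> i; rewrite UE eqxx.
  by have [->|_] := eqVneq i q; rewrite ?xq ?mulr0 ?mul0r addr0.
move=> i l il; rewrite UE (negbTE il) add0r.
have [iq|] := eqVneq i q; last by rewrite mul0r eqxx.
by rewrite -iq [l == i]eq_sym (negbTE il).
Qed.

Lemma det_minor_col_delta (M : 'M[R]_n) (r q : 'I_n) :
  \det (row' r (col' q M)) =
  (-1) ^+ (r + q) * \det (\matrix_(i, j) if j == q then (i == r)%:R else M i j).
Proof.
rewrite [in RHS](expand_det_col _ q) (bigD1 r) //= big1 ?addr0 => [|i ir]; last first.
  by rewrite !mxE eqxx (negbTE ir) mul0r.
rewrite /cofactor !mxE !eqxx mul1r signrMK; congr (\det _); apply/matrixP => i j.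
by rewrite !mxE eq_sym (negbTE (neq_lift q j)).
Qed.

End Determinants.

Section TreeMatrix.
Context {R : comPzRingType} (n : nat).

Definition node_row (u : lnode n) : 'rV[R]_n := if u is Some i then delta_mx 0 i else 0.

Lemma node_row_entry u i : node_row u 0 i = (u == Some i)%:R.
Proof. by case: u => [j|]; rewrite !mxE // eqxx eq_sym. Qed.

Lemma node_row_sub_entry u v i :
  (node_row u - node_row v) 0 i = (u == Some i)%:R - (v == Some i)%:R.
Proof. by rewrite !mxE !node_row_entry. Qed.

Variables (g : lnode n -> lnode n) (q r : 'I_n).
Hypotheses (g_None : g None = None) (g_q : g (Some q) = Some q).

Definition tree_matrix : 'M[R]_n := \matrix_j
  if j == q then node_row (Some r)
  else node_row (Some j) - (g (Some j) != Some j)%:R *: node_row (g (Some j)).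

Lemma tree_matrix_entry i l : i != q -> tree_matrix i l =
  (i == l)%:R - ((g (Some i) != Some i) && (g (Some i) == Some l))%:R.
Proof.
move=> iq; rewrite mxE (negbTE iq) !mxE node_row_entry eqxx /=.
by rewrite eq_sym; case: (_ != _); rewrite ?mul1r ?mul0r.
Qed.

Lemma node_row_mul_tree_matrix u : g u != u ->
  node_row u *m tree_matrix = node_row u - node_row (g u).
Proof.
case: u => [j|]; last by rewrite g_None eqxx.
have [-> | jq] := eqVneq j q; first by rewrite g_q eqxx.
by rewrite -rowE rowK (negbTE jq) => ->; rewrite scale1r.
Qed.

Lemma node_row_mul_tree_matrix_fixed u : g u = u -> u != Some q ->
  node_row u *m tree_matrix = node_row u.
Proof.
case: u => [j|] gu uq; last by rewrite mul0mx.
have [jq|jq] := eqVneq j q; first by rewrite jq eqxx in uq.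
by rewrite -rowE rowK (negbTE jq) gu eqxx scale0r subr0.
Qed.

Lemma det_tree_matrix_cycle : ~~ cycle_free g -> \det tree_matrix = 0.
Proof.
case/cycle_freePn => -[j0|]; last by rewrite g_None eqxx.
set x := Some j0 => /andP[gx cyc_x].
pose v := \sum_(m < order g x) node_row (iter m g x).
apply: (@det_eq0_lker _ _ _ v j0).
  rewrite mulmx_suml (eq_bigr (fun m : 'I_(order g x) =>
    node_row (iter m g x) - node_row (iter m.+1 g x))) => [|m _].
    by rewrite sum_iter_telescope iter_order_fconnect ?subrr.
  by rewrite node_row_mul_tree_matrix // (cycle_moves gx cyc_x) ?fconnect_iter.
rewrite summxE (bigD1 (Ordinal (order_gt0 g x))) // node_row_entry /= eqxx.
rewrite big1 ?addr0 // => m m0; rewrite node_row_entry.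
have [mx|//] := eqVneq (iter m g x) x; case/eqP: m0; apply/val_inj => /=.
by rewrite -(findex_iter (ltn_ord m)) mx findex0.
Qed.

Lemma det_tree_matrix_replace_row s : cycle_free g -> g s = s ->
  \det (\matrix_i (if i == q then node_row s else row i tree_matrix)) =
  (s == Some q)%:R.
Proof.
move=> gP gs; set Q := \matrix_i _.
have row_Q i : row i Q = if i == q then node_row s else row i tree_matrix.
  by rewrite rowK.
have [sq|sq] := eqVneq s (Some q); last first.
  apply: (@det_eq0_lker _ _ _ (delta_mx 0 q - node_row s) q).
    have fixed_Q u : g u = u -> u != Some q -> node_row u *m Q = node_row u.
      case: u => [j|] gu uq; last by rewrite mul0mx.
      have jq : j != q by apply: contraNneq uq => ->.
      by rewrite -rowE row_Q (negbTE jq) -(node_row_mul_tree_matrix_fixed gu uq) rowE.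
    by rewrite mulmxBl -rowE row_Q eqxx fixed_Q ?subrr.
  by rewrite !mxE node_row_entry !eqxx (negbTE sq) subr0.
have Q_entry i l : Q i l = (if i == q then node_row s else row i tree_matrix) 0 l.
  by rewrite -row_Q [RHS]mxE.
(* Off-diagonal entries go from a moving node to its image, whose orbit is smaller. *)
apply: (det_unitriangular (d := fun i => order g (Some i))) => [i|i l il].
  rewrite Q_entry; have [->|iq] := eqVneq i q; first by rewrite sq node_row_entry eqxx.
  by rewrite mxE tree_matrix_entry // eqxx; case: eqP; rewrite ?andbF subr0.
rewrite Q_entry; have [iq|iq] := eqVneq i q.
  by rewrite sq -iq node_row_entry (inj_eq Some_inj) (negbTE il) eqxx.
rewrite mxE tree_matrix_entry // (negbTE il) sub0r oppr_eq0.
case: andP => [[gi /eqP gil] _|_]; last by rewrite eqxx.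
by rewrite (cycle_free_orderS gP gi) gil.
Qed.

Lemma det_tree_matrix_cycle_free : cycle_free g ->
  \det tree_matrix = (sink g (Some r) == Some q)%:R.
Proof.
move=> gP; pose x m := iter m g (Some r).
pose y := \sum_(m < #|{: lnode n}| | g (x m) != x m) node_row (x m).
have yP : y *m tree_matrix = node_row (Some r) - node_row (sink g (Some r)).
  rewrite mulmx_suml big_mkcond -(sum_iter_telescope g (fun u => node_row u)).
  apply: eq_bigr => m _; case: ifP => [gx|/negbFE/eqP gx].
    by rewrite node_row_mul_tree_matrix.
  by rewrite iterS -/(x m) gx subrr.
have yq : y 0 q = 0.
  rewrite summxE big1 // => m; rewrite node_row_entry.
  by have [->|] := eqVneq (x m) (Some q); rewrite ?g_q ?eqxx.
(* Subtracting y *m tree_matrix from row q turns it into e_(sink r). *)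
rewrite -(@det_add_row_comb _ _ _ (- y) q) ?mxE ?yq ?oppr0 //.
rewrite -(det_tree_matrix_replace_row gP (sink_fixed gP _)); congr (\det _).
apply/row_matrixP => i; rewrite !rowK; have [_|//] := eqVneq i q.
by rewrite mulNmx yP eqxx /= opprB addrC subrK.
Qed.

Lemma det_tree_matrix :
  \det tree_matrix = (cycle_free g && (sink g (Some r) == Some q))%:R.
Proof.
by case: (boolP (cycle_free g)) => [/det_tree_matrix_cycle_free|/det_tree_matrix_cycle].
Qed.

End TreeMatrix.

Section EdgeChoices.
Variables (n : nat) (E : rel 'I_n) (Leak : {set 'I_n}) (q : 'I_n).
Hypothesis E_irr : irreflexive E.
Local Notation H := (edges_Gtilde_star E Leak q).
Local Notation choice := {ffun 'I_n -> option (lnode n)}.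

Definition chosen_edges (f : choice) : {set ledge n} :=
  [set e | if e.1 is Some j then f j == Some e.2 else false].

Definition choice_succ (f : choice) (u : lnode n) : lnode n :=
  if u is Some j then odflt u (f j) else u.

Definition edge_choice (F : {set ledge n}) : choice :=
  [ffun j => [pick t | (Some j, t) \in F]].

Definition lambda_count (f : choice) : nat := #|[set j | (j != q) && (f j == None)]|.

Lemma mem_chosen_edges f u t :
  ((u, t) \in chosen_edges f) = if u is Some j then f j == Some t else false.
Proof. by rewrite inE. Qed.

Lemma chosen_edgesE f :
  chosen_edges f = [set (Some j, odflt None (f j)) | j in [set j | f j != None]].
Proof.
apply/setP => -[[j|] t]; rewrite mem_chosen_edges; last by apply/esym/imsetP => -[].
apply/eqP/imsetP => [fj|[i]]; first by exists j; rewrite ?inE fj.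
by rewrite inE => + [-> ->]; case: (f i).
Qed.

Lemma chosen_edgesK : cancel chosen_edges edge_choice.
Proof.
move=> f; apply/ffunP => j; rewrite ffunE; case: pickP => [t|none].
  by rewrite mem_chosen_edges => /eqP.
by case fj: (f j) => [t|] //; have := none t; rewrite mem_chosen_edges fj eqxx.
Qed.

Lemma outdeg_chosen_edges f u : (#|[set e in chosen_edges f | e.1 == u]| <= 1)%N.
Proof.
apply/card_le1_eqP => -[u1 t1] [u2 t2]; rewrite !inE /=.
move=> /andP[e1 /eqP u1u] /andP[e2 /eqP u2u]; move: e1 e2; rewrite u1u u2u.
by case: u {u1u u2u} => [j|] // /eqP -> /eqP [->].
Qed.

Lemma edge_choiceK (F : {set ledge n}) : F \subset H ->
  (forall u, #|[set e in F | e.1 == u]| <= 1)%N -> chosen_edges (edge_choice F) = F.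
Proof.
move=> /subsetP FH outdeg; apply/setP => -[[j|] t]; last first.
  by rewrite mem_chosen_edges; apply/esym/negP => /FH; rewrite inE.
rewrite mem_chosen_edges ffunE; case: pickP => [t' /= jt'|none]; last by rewrite none.
apply/eqP/idP => [[<-] //|jt]; congr Some.
have /card_le1_eqP/(_ (Some j, t') (Some j, t)) := outdeg (Some j).
by rewrite !inE jt jt' eqxx => /(_ isT isT) [].
Qed.

Section ValidChoice.
Variables (f : choice) (fH : chosen_edges f \subset H).

Lemma choice_edge j t : f j = Some t -> (Some j, t) \in H.
Proof. by move=> fj; apply: (subsetP fH); rewrite mem_chosen_edges fj. Qed.

Lemma choice_q : f q = None.
Proof.
case fq: (f q) => [t|] //; have := choice_edge fq; rewrite inE.
by case: t {fq} => [i|]; rewrite /= eqxx ?andbF.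
Qed.

Lemma choice_no_loop j : f j != Some (Some j).
Proof. by apply/negP => /eqP/choice_edge; rewrite inE /= E_irr. Qed.

Lemma choice_succ_q : choice_succ f (Some q) = Some q.
Proof. by rewrite /= choice_q. Qed.

Lemma chosen_edges_fun_edges : chosen_edges f = fun_edges (choice_succ f).
Proof.
apply/setP => -[[j|] t]; rewrite mem_chosen_edges mem_fun_edges /=; last first.
  by case: eqP => // <-; rewrite eqxx.
case fj: (f j) => [t'|] /=; last by rewrite [Some j == t]eq_sym andbN.
rewrite (inj_eq Some_inj); case: eqP => // <-; apply/esym.
by apply: contraNneq (choice_no_loop j) => <-; rewrite fj.
Qed.

Lemma card_chosen_edges : (#|chosen_edges f| + lambda_count f)%N = n.-1.
Proof.
rewrite chosen_edgesE card_imset => [|i j [] //].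
have -> : lambda_count f = #|[set j | f j == None] :\ q|.
  by apply: eq_card => j; rewrite !inE andbC.
have q_idle : q \in [set j | f j == None] by rewrite inE choice_q.
have := cardsC [set j | f j == None]; rewrite card_ord (cardsD1 q) q_idle => card_n.
rewrite -[in RHS]card_n.
by rewrite add1n addSn addnC; congr (_ + _)%N; apply: eq_card => j; rewrite !inE.
Qed.

End ValidChoice.

Lemma forest_chosen_edges f r :
  spanning_incoming_forest H (chosen_edges f) &&
    same_component (chosen_edges f) (Some r) (Some q) =
  [&& chosen_edges f \subset H, cycle_free (choice_succ f) &
      sink (choice_succ f) (Some r) == Some q].
Proof.
rewrite /spanning_incoming_forest; have [fH|] //= := boolP (chosen_edges f \subset H).
rewrite (chosen_edges_fun_edges fH) uacyclic_fun_edgesE.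
have -> : [forall u, #|[set e in fun_edges (choice_succ f) | e.1 == u]| <= 1]%N.
  by apply/forallP => u; rewrite -(chosen_edges_fun_edges fH) outdeg_chosen_edges.
have [gP|] //= := boolP (cycle_free (choice_succ f)).
by rewrite same_component_fun_edges // [sink _ (Some q)](iter_fix _ (choice_succ_q fH)).
Qed.

Lemma card_forest F : spanning_incoming_forest H F -> (#|F| <= n.-1)%N.
Proof.
case/and3P => FH _ /forallP outdeg; rewrite -(edge_choiceK FH outdeg).
by rewrite -(card_chosen_edges (f := edge_choice F)) ?leq_addr // edge_choiceK.
Qed.

End EdgeChoices.

Section ModelDeterminant.
Variables (R : comNzRingType) (n : nat) (E : rel 'I_n) (Leak : {set 'I_n}).
Variables (a : 'I_n -> 'I_n -> R) (a0 : 'I_n -> R) (q r : 'I_n).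
Hypothesis E_irr : irreflexive E.
Local Notation H := (edges_Gtilde_star E Leak q).
Local Notation A := (compartmental_matrix E Leak a a0).

Lemma compartmental_matrix_col i j : j != q ->
  A i j = - \sum_(t | (Some j, t) \in H)
              elabel a a0 (Some j, t) * (node_row (Some j) - node_row t) 0 i.
Proof.
move=> jq.
have memH t : ((Some j, t) \in H) = if t is Some k then E j k else j \in Leak.
  by rewrite inE; case: t => [k|] /=; rewrite jq andbT.
rewrite big_mkcond big_option memH node_row_sub_entry.
under eq_bigr => k _ do rewrite memH node_row_sub_entry.
rewrite mxE; have [<-|ji] := eqVneq j i.
  rewrite eqxx /= subr0 mulr1 opprD addrC big_mkcond; congr (- _ - _).
  apply: eq_bigr => k _; case: ifP => // jk.
  have kj : k != j by apply: contraTneq jk => ->; rewrite E_irr.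
  by rewrite (inj_eq Some_inj) (negbTE kj) subr0 mulr1.
rewrite (_ : (Some j == Some i) = false); last by rewrite (inj_eq Some_inj) (negbTE ji).
rewrite /= subrr mulr0 if_same add0r (bigD1 i) //= eqxx big1 ?addr0 => [|k ki].
  by case: (E j i); rewrite ?sub0r ?mulrN1 ?opprK ?oppr0.
by rewrite (inj_eq Some_inj) (negbTE ki) subrr mulr0 if_same.
Qed.

Definition choice_row (j : 'I_n) (c : option (lnode n)) : 'rV[{poly R}]_n :=
  if j == q then (if c is None then node_row (Some r) else 0)
  else if c is Some t then
    (if (Some j, t) \in H
     then (elabel a a0 (Some j, t))%:P *: (node_row (Some j) - node_row t) else 0)
  else 'X *: node_row (Some j).

Lemma choice_rows_sum :
  (\matrix_(i, j) if j == q then (i == r)%:R else ('X%:M - map_mx polyC A) i j)^T =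
  \matrix_j \sum_c choice_row j c.
Proof.
apply/matrixP => j i; rewrite [LHS]mxE [LHS]mxE [RHS]mxE summxE big_option /choice_row.
have [_|jq] := eqVneq j q.
  by rewrite big1 ?addr0 => [|t _]; rewrite ?mxE // node_row_entry eq_sym.
have -> : ('X%:M - map_mx polyC A) i j = 'X *+ (i == j) - (A i j)%:P by rewrite !mxE.
rewrite (compartmental_matrix_col _ jq) polyCN opprK rmorph_sum big_mkcond mxE.
rewrite node_row_entry mulr_natr eq_sym; congr (_ + _); apply: eq_bigr => t _.
case: ifP => _; last by rewrite mxE.
by rewrite node_row_sub_entry [RHS]mxE node_row_sub_entry rmorphM rmorphB !rmorph_nat.
Qed.

Lemma det_choice_rows_invalid (f : {ffun 'I_n -> option (lnode n)}) :
  ~~ (chosen_edges f \subset H) -> \det (\matrix_j choice_row j (f j)) = 0.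
Proof.
case/subsetPn => -[[j|] t]; rewrite mem_chosen_edges // => /eqP fj tH.
apply: (@det_eq0_lker _ _ _ (delta_mx 0 j) j); last by rewrite mxE !eqxx.
by rewrite -rowE rowK /choice_row fj (negbTE tH); case: (j == q).
Qed.

Lemma det_choice_rows_valid (f : {ffun 'I_n -> option (lnode n)}) :
  chosen_edges f \subset H ->
  \det (\matrix_j choice_row j (f j)) =
  (piF a a0 (chosen_edges f))%:P * 'X^(lambda_count q f) *
  \det (tree_matrix (choice_succ f) q r).
Proof.
move=> fH; pose s : 'rV[{poly R}]_n := \row_j
  if j == q then 1 else if f j is Some t then (elabel a a0 (Some j, t))%:P else 'X.
have -> : \matrix_j choice_row j (f j) = diag_mx s *m tree_matrix (choice_succ f) q r.
  apply/row_matrixP => j.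
  rewrite rowK row_mul row_diag_mx -scalemxAl -rowE rowK mxE /choice_row.
  have [->|jq] := eqVneq j q; first by rewrite (choice_q fH) scale1r.
  rewrite /=; case fj: (f j) => [t|] /=; last by rewrite eqxx scale0r subr0.
  rewrite (choice_edge fH fj) (_ : t != Some j) ?scale1r //.
  by apply: contraNneq (choice_no_loop E_irr fH j) => <-; rewrite fj.
rewrite det_mulmx det_diag; congr (_ * _).
rewrite (bigID (fun j => f j == None)) /= mulrC; congr (_ * _).
  rewrite chosen_edgesE /piF big_imset => [|i j _ _ [] //]; rewrite rmorph_prod.
  apply: eq_big => j; first by rewrite inE.
  rewrite mxE; have [->|_] := eqVneq j q; first by rewrite (choice_q fH) eqxx.
  by case: (f j).
rewrite (bigID (fun j => j == q)) /= big1 ?mul1r => [|j /andP[_ /eqP ->]]; last first.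
  by rewrite mxE eqxx.
rewrite -prodr_const; apply: eq_big => j; first by rewrite !inE andbC.
by case/andP => /eqP fj jq; rewrite mxE (negbTE jq) fj.
Qed.

Lemma det_minor_forest_expansion :
  \det (row' r (col' q ('X%:M - map_mx polyC A))) = (-1) ^+ (r + q) *
    \sum_(F | spanning_incoming_forest H F && same_component F (Some r) (Some q))
      (piF a a0 F)%:P * 'X^(n.-1 - #|F|).
Proof.
rewrite det_minor_col_delta -det_tr choice_rows_sum det_sum_rows; congr (_ * _).
rewrite (reindex_onto (@chosen_edges n) (@edge_choice n)) => [|F]; last first.
  by case/andP=> /and3P[FH _ /forallP outdeg] _; exact: edge_choiceK FH outdeg.
rewrite big_mkcond [RHS]big_mkcond; apply: eq_bigr => f _.
rewrite chosen_edgesK eqxx andbT forest_chosen_edges //.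
have [fH|fH] := boolP (chosen_edges f \subset H); last exact: det_choice_rows_invalid.
rewrite det_choice_rows_valid // (det_tree_matrix r erefl (choice_succ_q fH)).
rewrite -(card_chosen_edges fH) addKn.
by case: (_ && _); rewrite ?mulr1 ?mulr0.
Qed.

End ModelDeterminant.

Theorem proposition3p12 (R : comNzRingType) (n : nat) (E : rel 'I_n)
  (Hirr : irreflexive E) (In Out Leak : {set 'I_n})
  (a : 'I_n -> 'I_n -> R) (a0 : 'I_n -> R) (q r : 'I_n) :
  let A := compartmental_matrix E Leak a a0 in
  let D := \det (row' r (col' q ('X%:M - map_mx polyC A))) in
  (size D <= n)%N /\
  forall k : nat, (k < n)%N ->
    D`_k = (-1) ^+ (q + r)%N *
           \sum_(F in forests_jkl (edges_Gtilde_star E Leak q) (n - k - 1)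
                                  (Some r) (Some q))
              piF a a0 F.
Proof.
move=> A D; set H := edges_Gtilde_star E Leak q.
have coefD k : D`_k = (-1) ^+ (q + r)%N *
    \sum_(F | (spanning_incoming_forest H F && same_component F (Some r) (Some q))
              && (n.-1 - #|F| == k)%N) piF a a0 F.
  rewrite /D (det_minor_forest_expansion _ _ _ _ _ Hirr) addnC -(rmorph_sign (@polyC R)).
  rewrite coefCM coef_sum [in RHS]big_mkcondr; congr (_ * _); apply: eq_bigr => F _.
  by rewrite coefCM coefXn eq_sym; case: (_ == _); rewrite ?mulr1 ?mulr0.
have n_gt0 : (0 < n)%N by apply: leq_ltn_trans (ltn_ord q).
split=> [|k lt_kn].
  apply/leq_sizeP => k le_nk; rewrite coefD big_pred0 ?mulr0 // => F.
  by rewrite ltn_eqF ?andbF //; lia.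
rewrite coefD; congr (_ * _); apply: eq_bigl => F; rewrite inE.
have [HF|] //= := boolP (spanning_incoming_forest H F).
have le_F : (#|F| <= n.-1)%N := card_forest HF.
(* [set] identifies the two syntactically different forms of #|F| for lia. *)
rewrite andbC; congr (_ && _); move: le_F; set m := #|F| => le_F; apply/eqP/eqP; lia.
Qed.
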